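(* Let $N(I,O,r)$ be a negator and $T(B,C)$ a proper $(2,3)$-pole. Form the $(2,3)$-pole $M=\operatorname{NT}(N,T)$ as follows: perform the junction of $O$ and $B$; choose one semiedge of $C$, whose dangling edge is $e$, subdivide $e$ with a new vertex $v$ (so that $v$ lies on $e$ and the free end of $e$ remains a semiedge, now of a dangling edge at $v$), and attach the residual semiedge $r$ of $N$ to $v$. The connectors of $M$ are $I=\{i_1,i_2\}$ and $C'=\{e_1,e_2,e_3\}$, where $e_1,e_2$ are the two other semiedges of $C$ and $e_3$ is the free end of the subdivided edge $e$. Then every colouring $\varphi$ of $M$ satisfies $\varphi(i_1)=\varphi(i_2)$ and $\varphi(e_1)+\varphi(e_2)+\varphi(e_3)=0$. Moreover, if $N$ is a perfect negator and $T$ is perfect, then for all $x,a,b,c\in\mathbb{K}$ with $a+b+c=0$ there is a colouring $\varphi$ of $M$ with $(\varphi(i_1),\varphi(i_2),\varphi(e_1),\varphi(e_2),\varphi(e_3))=(x,x,a,b,c)$.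
   Context: A multipole consists of vertices and edges; each edge has two ends, each either incident with a vertex or free; a free end is a semiedge. All multipoles are cubic (every vertex incident with exactly three edge ends; loops and parallel edges allowed). Semiedges are partitioned into connectors; a $(c_1,\dots,c_n)$-pole has connectors of sizes $c_1,\dots,c_n$. The junction of two semiedges identifies the two free ends into a single edge (attaching a semiedge to a vertex means making that vertex the end of it); the junction of two connectors performs junctions along an arbitrary bijection. Let $\mathbb{K}=\{(0,1),(1,0),(1,1)\}\subset\mathbb{Z}_2\times\mathbb{Z}_2$. A colouring of a multipole assigns elements of $\mathbb{K}$ to edges so that at every vertex the three incident edge ends get distinct colours. Flow through a connector $S$: $\varphi_*(S)=\sum_{e\in S}\varphi(e)$. A snark is a connected cubic graph with no colouring. Negator: for a snark $G$ and a path $uwv$ in $G$, $\operatorname{Neg}(G;u,v)$ is the $(2,2,1)$-pole $N(I,O,r)$ obtained by deleting $u,w,v$, with $I$ the two semiedges formerly at $u$, $O$ the two semiedges formerly at $v$, $r$ the semiedge formerly at $w$. A negator $N(\{i_1,i_2\},\{o_1,o_2\},r)$ is perfect if its set of tuples $(\varphi(i_1),\varphi(i_2),\varphi(o_1),\varphi(o_2),\varphi(r))$ over colourings equals $\{(x,x,a,b,a+b),(a,b,x,x,a+b): x,a,b\in\mathbb{K}, a\ne b\}$. A $(2,3)$-pole $T(B,C)$ is proper if $\varphi_*(B)\ne0$ and $\varphi_*(C)\ne0$ for every colouring; it is perfect (as a proper $(2,3)$-pole) if its colouring set on $(B,C)$ equals $\{(x_1,x_2,y_1,y_2,y_3)\in\mathbb{K}^5: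 x_1+x_2=y_1+y_2+y_3\ne0\}$. *)

From mathcomp Require Import all_boot all_algebra.
Unset Strict Implicit. Unset Printing Implicit Defensive.
Import GRing.Theory.
Local Open Scope ring_scope.

Definition colr := ('Z_2 * 'Z_2)%type.
Definition inK (c : colr) : bool := c != 0.

(** A (raw) multipole, in dart (edge-end) form.
    - [mD] : the edge ends ("darts"); [mmate] pairs the two ends of an edge;
    - [mvtx d] : the vertex the end [d] is incident with, or [None] if free;
    - [mglue] : identification of free ends produced by junctions: a junction of
      two semiedges f, g identifies their free ends into a single edge; we record
      this by [mglue f = g], [mglue g = f] ([mglue] is the identity elsewhere).
    An edge is thus a chain of darts linked alternately by [mmate] and [mglue];
    a semiedge is a free end that is not glued. *)
Record mpole := MPole {
  mV : finType;
  mD : finType;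
  mvtx : mD -> option mV;
  mmate : mD -> mD;
  mglue : mD -> mD }.

Definition is_multipole (M : mpole) : Prop :=
  involutive (mmate M) /\ (forall d, mmate M d != d) /\
  involutive (mglue M) /\ (forall d, mglue M d != d -> mvtx M d = None) /\
  (forall x : mV M, #|[set d | mvtx M d == Some x]| = 3).

Definition semiedge (M : mpole) (d : mD M) : bool :=
  (mvtx M d == None) && (mglue M d == d).

Definition colouring (M : mpole) (phi : mD M -> colr) : Prop :=
  (forall d, inK (phi d)) /\
  (forall d, phi (mmate M d) = phi d) /\
  (forall d, phi (mglue M d) = phi d) /\
  (forall d1 d2, d1 != d2 -> mvtx M d1 != None -> mvtx M d1 = mvtx M d2 ->
     phi d1 != phi d2).

Definition pole221 (M : mpole) (i1 i2 o1 o2 r : mD M) : Prop :=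
  uniq [:: i1; i2; o1; o2; r] /\ all (semiedge M) [:: i1; i2; o1; o2; r] /\
  (forall d, semiedge M d -> d \in [:: i1; i2; o1; o2; r]).

Definition pole23 (M : mpole) (b1 b2 c1 c2 c3 : mD M) : Prop :=
  uniq [:: b1; b2; c1; c2; c3] /\ all (semiedge M) [:: b1; b2; c1; c2; c3] /\
  (forall d, semiedge M d -> d \in [:: b1; b2; c1; c2; c3]).

Definition adj (M : mpole) : rel (mV M) :=
  fun x y => [exists d, (mvtx M d == Some x) && (mvtx M (mmate M d) == Some y)].

Definition snark (G : mpole) : Prop :=
  is_multipole G /\ (forall d, mvtx G d != None) /\
  (forall x y : mV G, connect (adj G) x y) /\
  ~ (exists phi, colouring G phi).

(** Negator construction Neg(G;u,v) for a path u w v: delete u, w, v together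
    with the edges joining two of them; edges from them to the rest become
    dangling edges (the dart formerly at the deleted vertex becomes free). *)
Section Neg.
Variables (G : mpole) (u w v : mV G).
Definition delS (o : option (mV G)) : bool :=
  if o is Some x then x \in [:: u; w; v] else false.
Definition NegV := {x : mV G | x \notin [:: u; w; v]}.
Definition NegD := {d : mD G | ~~ (delS (mvtx G d) && delS (mvtx G (mmate G d)))}.
Definition Neg_vtx (d : NegD) : option NegV :=
  if mvtx G (val d) is Some x then insub x else None.
Definition Neg_mate (d : NegD) : NegD := insubd d (mmate G (val d)).
Definition Neg : mpole := @MPole NegV NegD Neg_vtx Neg_mate id.
Definition Neg_I : {set NegD} := [set d | mvtx G (val d) == Some u].
Definition Neg_r : {set NegD} := [set d | mvtx G (val d) == Some w].
Definition Neg_O : {set NegD} := [set d | mvtx G (val d) == Some v].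
End Neg.

Definition mp_iso (A B : mpole) (fV : mV A -> mV B) (fD : mD A -> mD B) : Prop :=
  bijective fV /\ bijective fD /\
  (forall d, mvtx B (fD d) = omap fV (mvtx A d)) /\
  (forall d, mmate B (fD d) = fD (mmate A d)) /\
  (forall d, mglue B (fD d) = fD (mglue A d)).

Definition is_negator (N : mpole) (i1 i2 o1 o2 r : mD N) : Prop :=
  exists (G : mpole) (u w v : mV G),
    snark G /\ uniq [:: u; w; v] /\ adj G u w /\ adj G w v /\
    exists (fV : mV N -> NegV G u w v) (fD : mD N -> NegD G u w v),
      mp_iso N (Neg G u w v) fV fD /\
      [set fD i1; fD i2] = Neg_I G u w v /\
      [set fD o1; fD o2] = Neg_O G u w v /\
      [set fD r] = Neg_r G u w v.

Definition perfect_negator (N : mpole) (i1 i2 o1 o2 r : mD N) : Prop :=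
  is_negator N i1 i2 o1 o2 r /\
  forall t1 t2 t3 t4 t5 : colr,
    (exists phi, colouring N phi /\
       [/\ phi i1 = t1, phi i2 = t2, phi o1 = t3, phi o2 = t4 & phi r = t5])
    <->
    ((exists x a b, [/\ inK x, inK a, inK b, a != b &
        (t1, t2, t3, t4, t5) = (x, x, a, b, a + b)]) \/
     (exists x a b, [/\ inK x, inK a, inK b, a != b &
        (t1, t2, t3, t4, t5) = (a, b, x, x, a + b)])).

Definition proper23 (T : mpole) (b1 b2 c1 c2 c3 : mD T) : Prop :=
  forall phi, colouring T phi ->
    phi b1 + phi b2 != 0 /\ phi c1 + phi c2 + phi c3 != 0.

Definition perfect23 (T : mpole) (b1 b2 c1 c2 c3 : mD T) : Prop :=
  proper23 T b1 b2 c1 c2 c3 /\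
  forall x1 x2 y1 y2 y3 : colr,
    (exists phi, colouring T phi /\
       [/\ phi b1 = x1, phi b2 = x2, phi c1 = y1, phi c2 = y2 & phi c3 = y3])
    <->
    ([/\ inK x1, inK x2, inK y1, inK y2 & inK y3] /\
     x1 + x2 = y1 + y2 + y3 /\ x1 + x2 != 0).

(** New darts: [inr false] (end at v of the new dangling edge) and
    [inr true] (its free end e3). *)
Section NT.
Variables (N T : mpole) (i1 i2 o1 o2 r : mD N) (b1 b2 c1 c2 c3 : mD T).
Definition NT_V := (mV N + mV T + unit)%type.
Definition NT_D := (mD N + mD T + bool)%type.
Definition NT_vtx (d : NT_D) : option NT_V :=
  match d with
  | inl (inl d) => if d == r then Some (inr tt) else omap (fun x => inl (inl x)) (mvtx N d)
  | inl (inr d) => if d == c3 then Some (inr tt) else omap (fun x => inl (inr x)) (mvtx T d)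
  | inr false => Some (inr tt)
  | inr true => None
  end.
Definition NT_mate (d : NT_D) : NT_D :=
  match d with
  | inl (inl d) => inl (inl (mmate N d))
  | inl (inr d) => inl (inr (mmate T d))
  | inr b => inr (~~ b)
  end.
Definition NT_glue (d : NT_D) : NT_D :=
  match d with
  | inl (inl d) => if d == o1 then inl (inr b1) else if d == o2 then inl (inr b2)
                   else inl (inl (mglue N d))
  | inl (inr d) => if d == b1 then inl (inl o1) else if d == b2 then inl (inl o2)
                   else inl (inr (mglue T d))
  | inr b => inr b
  end.
Definition NT : mpole := @MPole NT_V NT_D NT_vtx NT_mate NT_glue.
End NT.

(* In a colouring of NT(N,T) the flow through B is nonzero because T is proper,
   so the two semiedges of O get different colours.  A negator never has both I
   and O bichromatic: by parity, r would carry the sum A + B of the flows A, B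
   through I and O, with A != B, and colouring the deleted edges u w and w v by
   A and B would colour the snark G.  Hence I is monochromatic, and the parity of
   N and of T together with the new vertex v give the zero flow through C'.
   Conversely, for a + b + c = 0 pick y in K different from c, and colour T by
   (y, c; a, b, y), N by (x, x; y, c; y + c) and the new dangling edge by c. *)

From mathcomp Require Import all_boot all_algebra.
Import GRing.Theory.
Local Open Scope ring_scope.

Lemma colr_addrr (a : colr) : a + a = 0.
Proof. by case: a => [[[|[|?]] ?] [[|[|?]] ?]]; apply/eqP. Qed.

Lemma colr_oppr (a : colr) : - a = a.
Proof. by rewrite -[LHS]add0r -(colr_addrr a) addrK. Qed.

Lemma colr_addr_eq0 (a b : colr) : (a + b == 0) = (a == b).
Proof. by rewrite addr_eq0 colr_oppr. Qed.

Lemma colr_addr0_eq {a b : colr} : a + b = 0 -> a = b.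
Proof. by move/eqP; rewrite colr_addr_eq0 => /eqP. Qed.

Lemma inK_add (a b : colr) : a != b -> inK (a + b).
Proof. by rewrite /inK colr_addr_eq0. Qed.

Lemma colr_addr_neql (a b : colr) : inK b -> a + b != a.
Proof. by rewrite -subr_eq0 addrAC subrr add0r. Qed.

Lemma colr_addr_neqr (a b : colr) : inK a -> a + b != b.
Proof. by rewrite addrC; apply: colr_addr_neql. Qed.

Lemma colr_sum3 (a b c : colr) :
  inK a -> inK b -> inK c -> uniq [:: a; b; c] -> a + b + c = 0.
Proof.
move=> Ka Kb Kc abc; apply/eqP; move: Ka Kb Kc abc.
by case: a => [[[|[|?]] ?] [[|[|?]] ?]]; case: b => [[[|[|?]] ?] [[|[|?]] ?]];
   case: c => [[[|[|?]] ?] [[|[|?]] ?]].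
Qed.

Lemma colr_uniq_sum (a b : colr) : inK a -> inK b -> a != b -> uniq [:: a + b; a; b].
Proof. by move=> Ka Kb ab; rewrite /= !inE negb_or colr_addr_neql ?colr_addr_neqr ?ab. Qed.

Lemma inK_exists_neq (c : colr) : exists2 y, inK y & y != c.
Proof.
have [->|ne] := eqVneq c (1, 0); first by exists (0, 1).
by exists (1, 0); rewrite // eq_sym.
Qed.

Definition proper_at (M : mpole) (phi : mD M -> colr) (x : mV M) : Prop :=
  forall d1 d2, d1 != d2 -> mvtx M d1 = Some x -> mvtx M d2 = Some x -> phi d1 != phi d2.

Lemma colouring_proper_at {M : mpole} {phi : mD M -> colr} (x : mV M) :
  colouring M phi -> proper_at M phi x.
Proof. by case=> _ [_ [_ phiV]] d1 d2 ne x1 x2; apply: phiV; rewrite ?x1 ?x2. Qed.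

Lemma colouring_intro (M : mpole) (phi : mD M -> colr) :
  (forall d, inK (phi d)) -> (forall d, phi (mmate M d) = phi d) ->
  (forall d, phi (mglue M d) = phi d) -> (forall x, proper_at M phi x) ->
  colouring M phi.
Proof.
move=> phiK phim phig phiV; do 3!split=> //.
by move=> d1 d2 ne; case x1: (mvtx M d1) => [x|] // _ x2; apply: (phiV x).
Qed.

Lemma uniq_map_neq {T1 T2 : eqType} {f : T1 -> T2} {s : seq T1} {x y : T1} :
  uniq (map f s) -> x \in s -> y \in s -> x != y -> f x != f y.
Proof.
elim: s => //= z s IH /andP [fz_notin uniq_fs].
rewrite !inE => /predU1P [->|xs] /predU1P [->|ys]; rewrite ?eqxx // => ne.
- by apply: contraNneq fz_notin => ->; apply: map_f.
- by apply: contraNneq fz_notin => <-; apply: map_f.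
- exact: IH.
Qed.

Lemma proper_at_of_three {M : mpole} {phi : mD M -> colr} {x : mV M} {a b c : mD M} :
  is_multipole M -> uniq [:: a; b; c] ->
  mvtx M a = Some x -> mvtx M b = Some x -> mvtx M c = Some x ->
  uniq [:: phi a; phi b; phi c] -> proper_at M phi x.
Proof.
case=> _ [_ [_ [_ cubic]]] abc xa xb xc phi_abc.
have at_x_abc : [:: a; b; c] =i [set d | mvtx M d == Some x].
  apply/subset_cardP; first by rewrite cubic (card_uniqP abc).
  by apply/subsetP => d; rewrite !inE => /or3P [] /eqP ->; rewrite ?xa ?xb ?xc.
have in_abc d : mvtx M d = Some x -> d \in [:: a; b; c].
  by move=> xd; rewrite at_x_abc inE xd.
move=> d1 d2 ne /in_abc d1_abc /in_abc d2_abc.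
exact: (uniq_map_neq (s := [:: a; b; c]) phi_abc d1_abc d2_abc ne).
Qed.

Lemma colouring_pullback {A M : mpole} (fV : mV A -> mV M) (fD : mD A -> mD M)
    {phi : mD M -> colr} :
  injective fD ->
  (forall d, mmate M (fD d) = fD (mmate A d)) ->
  (forall d, mglue A d != d -> mglue M (fD d) = fD (mglue A d)) ->
  (forall d x, mvtx A d = Some x -> mvtx M (fD d) = Some (fV x)) ->
  colouring M phi -> colouring A (phi \o fD).
Proof.
move=> fD_inj fDm fDg fDv phiC; have [phiK [phim [phig _]]] := phiC.
apply: colouring_intro => [d|d|d|x d1 d2 ne x1 x2] /=.
- exact: phiK.
- by rewrite -fDm phim.
- by have [->|/fDg <-] := eqVneq (mglue A d) d; rewrite ?phig.
by apply: (colouring_proper_at (fV x) phiC); rewrite ?(inj_eq fD_inj) //; exact: fDv.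
Qed.

Lemma mp_iso_colouring {A B : mpole} {fV : mV A -> mV B} {fD : mD A -> mD B}
    {phi : mD B -> colr} :
  mp_iso A B fV fD -> colouring B phi -> colouring A (phi \o fD).
Proof.
case=> _ [fD_bij [fDv [fDm fDg]]]; apply: colouring_pullback => // [|d x xd].
  exact: bij_inj.
by rewrite fDv xd.
Qed.

Lemma mp_iso_sym {A B : mpole} {fV : mV A -> mV B} {fD : mD A -> mD B} :
  mp_iso A B fV fD -> exists gV gD, cancel fD gD /\ mp_iso B A gV gD.
Proof.
case=> [[gV fVK gVK] [[gD fDK gDK] [fDv [fDm fDg]]]].
exists gV, gD; split=> //.
split; first exact: (Bijective gVK fVK).
split; first exact: (Bijective gDK fDK).
split.
  by move=> d; rewrite -[in RHS](gDK d) fDv omap_comp; case: (mvtx A _) => //= x; rewrite fVK.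
by split=> d; apply: (can_inj fDK); rewrite -?fDm -?fDg !gDK.
Qed.

(* Among the pairs {d, f d} keep the member of smaller rank: both halves of the
   sum agree, and a + a = 0. *)
Lemma colr_sum_involution (T : finType) (A : pred T) (f : T -> T) (phi : T -> colr) :
  involutive f -> (forall d, A d -> f d != d) -> (forall d, A d -> A (f d)) ->
  (forall d, phi (f d) = phi d) -> \sum_(d | A d) phi d = 0.
Proof.
move=> fK f_free fA phif.
have Af d : A (f d) = A d by apply/idP/idP => /fA; rewrite ?fK.
pose lo d := (enum_rank d < enum_rank (f d))%N.
rewrite (bigID lo) /=; set S := \sum_(d | A d && lo d) phi d.
suff -> : \sum_(d | A d && ~~ lo d) phi d = S by rewrite colr_addrr.
rewrite (reindex_inj (inv_inj fK)) /=; apply: eq_big => [d|d _]; last exact: phif.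
rewrite Af /lo fK; case Ad: (A d) => //=.
have ne : (enum_rank d : nat) != enum_rank (f d).
  by rewrite val_eqE (inj_eq enum_rank_inj) eq_sym f_free.
by rewrite -leqNgt leq_eqVlt (negPf ne).
Qed.

Lemma colouring_vertex_sum {M : mpole} {phi : mD M -> colr} (x : mV M) :
  is_multipole M -> colouring M phi -> \sum_(d | mvtx M d == Some x) phi d = 0.
Proof.
case=> _ [_ [_ [_ cubic]]] phiC.
have phiV := colouring_proper_at x phiC; case: phiC => phiK _.
case: (big_enumP (fun d => mvtx M d == Some x)) => e big_e [uniq_e at_x] [_ size_e].
rewrite -big_e.
have := cubic x; rewrite cardsE -size_e.
case: e uniq_e at_x {big_e size_e} => [|a [|b [|c []]]] //= abc at_x _.
have [xa xb xc] : [/\ mvtx M a = Some x, mvtx M b = Some x & mvtx M c = Some x].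
  by split; apply/eqP; rewrite -[_ == _]at_x !inE eqxx ?orbT.
move: abc; rewrite !inE !big_cons big_nil addr0 addrA andbT negb_or.
move=> /andP [/andP [ab ac] bc].
by apply: colr_sum3; rewrite //= !inE negb_or !phiV.
Qed.

Lemma colouring_semiedge_sum {M : mpole} {phi : mD M -> colr} :
  is_multipole M -> colouring M phi -> \sum_(d | semiedge M d) phi d = 0.
Proof.
move=> M_mp phiC; have [mateK [mate_free [glueK [glue_free _]]]] := M_mp.
case: (phiC) => _ [phim [phig _]].
have all_sum : \sum_(d | xpredT d) phi d = 0.
  by apply: (@colr_sum_involution _ xpredT _ _ mateK) => // d _; apply: mate_free.
have bound_sum : \sum_(d | mvtx M d != None) phi d = 0.
  rewrite (partition_big (mvtx M) (fun o => o != None)) //=.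
  apply: big1 => -[x|] // _; rewrite -[RHS](colouring_vertex_sum x M_mp phiC).
  by apply: eq_bigl => d /=; case: eqP => // ->.
have glued_sum : \sum_(d | (mvtx M d == None) && (mglue M d != d)) phi d = 0.
  apply: (@colr_sum_involution _ (fun d => (mvtx M d == None) && (mglue M d != d)) _ _ glueK)
    => // d /andP [_ ne] //.
  by rewrite glueK [d == _]eq_sym ne andbT; apply/eqP/glue_free; rewrite glueK eq_sym.
rewrite (bigID (fun d => mvtx M d == None)) /= in all_sum.
rewrite (bigID (fun d => mglue M d == d)) /= in all_sum.
by rewrite bound_sum glued_sum !addr0 in all_sum.
Qed.

Lemma colouring_semiedge_seq {M : mpole} {phi : mD M -> colr} {s : seq (mD M)} :
  is_multipole M -> colouring M phi ->
  uniq s -> all (semiedge M) s -> (forall d, semiedge M d -> d \in s) ->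
  \sum_(d <- s) phi d = 0.
Proof.
move=> M_mp phiC uniq_s semi_s s_semi; rewrite -[RHS](colouring_semiedge_sum M_mp phiC).
rewrite big_uniq //; apply: eq_bigl => d.
by apply/idP/idP => [/(allP semi_s)|/s_semi].
Qed.

Lemma pole221_flow {N : mpole} {i1 i2 o1 o2 r : mD N} {phi : mD N -> colr} :
  is_multipole N -> pole221 N i1 i2 o1 o2 r -> colouring N phi ->
  phi r = (phi i1 + phi i2) + (phi o1 + phi o2).
Proof.
move=> N_mp [uniq_s [semi_s s_semi]] phiC; apply/esym/colr_addr0_eq.
have := colouring_semiedge_seq N_mp phiC uniq_s semi_s s_semi.
by rewrite !big_cons big_nil addr0 !addrA.
Qed.

Lemma pole23_flow {T : mpole} {b1 b2 c1 c2 c3 : mD T} {phi : mD T -> colr} :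
  is_multipole T -> pole23 T b1 b2 c1 c2 c3 -> colouring T phi ->
  phi b1 + phi b2 = phi c1 + phi c2 + phi c3.
Proof.
move=> T_mp [uniq_s [semi_s s_semi]] phiC; apply/colr_addr0_eq.
have := colouring_semiedge_seq T_mp phiC uniq_s semi_s s_semi.
by rewrite !big_cons big_nil addr0 !addrA.
Qed.

Lemma semiedge_neq_glued {M : mpole} {s d : mD M} :
  semiedge M s -> mglue M d != d -> (d == s) = false.
Proof. by case/andP=> _ /eqP s_free ne; apply: contraNF ne => /eqP ->; rewrite s_free. Qed.

Lemma semiedge_neq_bound {M : mpole} {s d : mD M} {x : mV M} :
  semiedge M s -> mvtx M d = Some x -> (d == s) = false.
Proof. by case/andP=> /eqP s_free _ dx; apply/eqP => ds; rewrite ds s_free in dx. Qed.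

Lemma pole221_semiedges {N : mpole} {i1 i2 o1 o2 r : mD N} :
  pole221 N i1 i2 o1 o2 r -> [/\ semiedge N o1, semiedge N o2, semiedge N r & o1 != o2].
Proof.
case=> /= + [/and5P [_ _ -> -> /andP [-> _]] _]; rewrite !inE !negb_or.
by move=> /and5P [_ _ /andP [-> _] _ _].
Qed.

Lemma pole23_semiedges {T : mpole} {b1 b2 c1 c2 c3 : mD T} :
  pole23 T b1 b2 c1 c2 c3 -> [/\ semiedge T b1, semiedge T b2 & semiedge T c3].
Proof. by case=> _ [/and5P [-> -> _ _ /andP [-> _]] _]. Qed.

Section NegatorExtension.

Context {G : mpole} {u w v : mV G}.
Hypotheses (G_mp : is_multipole G) (G_closed : forall d, mvtx G d != None)
  (uwv : uniq [:: u; w; v]).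
Context {du dw : mD G}.
Hypotheses (du_u : mvtx G du = Some u) (du_w : mvtx G (mmate G du) = Some w)
  (dw_w : mvtx G dw = Some w) (dw_v : mvtx G (mmate G dw) = Some v).
Context {psi : NegD G u w v -> colr} {y1 y2 z1 z2 t : NegD G u w v}.
Hypotheses (psiC : colouring (Neg G u w v) psi)
  (NegI : Neg_I G u w v = [set y1; y2]) (NegO : Neg_O G u w v = [set z1; z2])
  (Negr : Neg_r G u w v = [set t])
  (psi_y : psi y1 != psi y2) (psi_z : psi z1 != psi z2)
  (psi_t : psi t = (psi y1 + psi y2) + (psi z1 + psi z2)).

Local Notation kept d :=
  (~~ (delS G u w v (mvtx G d) && delS G u w v (mvtx G (mmate G d)))).
Local Notation A := (psi y1 + psi y2).
Local Notation B := (psi z1 + psi z2).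

(* The darts outside Neg(G;u,v) lie on the edges u w and w v, coloured A and B. *)
Definition Neg_extend (d : mD G) : colr :=
  if insub d is Some y then psi y
  else if (mvtx G d == Some u) || (mvtx G (mmate G d) == Some u) then A else B.

Lemma Neg_extend_val (y : NegD G u w v) : Neg_extend (val y) = psi y.
Proof. by rewrite /Neg_extend valK. Qed.

Lemma Neg_extend_deleted d : ~~ kept d ->
  Neg_extend d = if (mvtx G d == Some u) || (mvtx G (mmate G d) == Some u) then A else B.
Proof. by move=> del_d; rewrite /Neg_extend insubN. Qed.

Lemma kept_mate d : kept (mmate G d) = kept d.
Proof. by case: G_mp => mateK _; rewrite mateK andbC. Qed.

Lemma val_Neg_mate (y : NegD G u w v) : val (Neg_mate G u w v y) = mmate G (val y).
Proof. by rewrite /Neg_mate insubdK // unfold_in kept_mate (valP y). Qed.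

Lemma u_neq_w : u != w. Proof. by case/andP: uwv; rewrite !inE negb_or => /andP []. Qed.
Lemma u_neq_v : u != v. Proof. by case/andP: uwv; rewrite !inE negb_or => /andP []. Qed.

Lemma delS_uwv : [&& delS G u w v (Some u), delS G u w v (Some w) & delS G u w v (Some v)].
Proof. by rewrite /delS !inE !eqxx !orbT. Qed.

Lemma du_deleted : ~~ kept du /\ ~~ kept (mmate G du).
Proof. by rewrite kept_mate du_u du_w; case/and3P: delS_uwv => -> ->. Qed.

Lemma dw_deleted : ~~ kept dw /\ ~~ kept (mmate G dw).
Proof. by rewrite kept_mate dw_w dw_v; case/and3P: delS_uwv => _ -> ->. Qed.

Lemma val_neq_deleted {y : NegD G u w v} {d} : ~~ kept d -> val y != d.
Proof. by move=> del_d; apply/eqP => yd; move: del_d; rewrite -yd (valP y). Qed.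

Lemma inK_A : inK A. Proof. exact: inK_add. Qed.
Lemma inK_B : inK B. Proof. exact: inK_add. Qed.

Lemma A_neq_B : A != B.
Proof.
by case: psiC => psiK _; apply: contraTneq (psiK t) => AB; rewrite psi_t AB colr_addrr.
Qed.

Lemma Neg_extend_du : Neg_extend du = A /\ Neg_extend (mmate G du) = A.
Proof.
have [del del'] := du_deleted; case: G_mp => mateK _.
by rewrite !Neg_extend_deleted // mateK du_u eqxx orbT.
Qed.

Lemma Neg_extend_dw : Neg_extend dw = B /\ Neg_extend (mmate G dw) = B.
Proof.
have [del del'] := dw_deleted; case: G_mp => mateK _.
have [Sw Sv] : Some w != Some u /\ Some v != Some u.
  by rewrite !(inj_eq Some_inj) ![_ == u]eq_sym u_neq_w u_neq_v.
by rewrite !Neg_extend_deleted // mateK dw_w dw_v (negPf Sw) (negPf Sv).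
Qed.

Lemma Neg_I_vtx {y} : y \in [set y1; y2] -> mvtx G (val y) = Some u.
Proof. by rewrite -NegI inE => /eqP. Qed.

Lemma Neg_O_vtx {y} : y \in [set z1; z2] -> mvtx G (val y) = Some v.
Proof. by rewrite -NegO inE => /eqP. Qed.

Lemma Neg_r_vtx : mvtx G (val t) = Some w.
Proof. by have /[!inE] /eqP : t \in Neg_r G u w v by rewrite Negr set11. Qed.

Lemma Neg_extend_proper_u : proper_at G Neg_extend u.
Proof.
have [del _] := du_deleted; have [ext_du _] := Neg_extend_du.
apply: (proper_at_of_three G_mp _ du_u (Neg_I_vtx (set21 y1 y2)) (Neg_I_vtx (set22 y1 y2))).
  rewrite /= !inE negb_or ![du == _]eq_sym !(val_neq_deleted del) (inj_eq val_inj).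
  by rewrite /= andbT; apply: contraNneq psi_y => ->.
have [psiK _] := psiC; rewrite /= ext_du !Neg_extend_val.
exact: colr_uniq_sum (psiK _) (psiK _) psi_y.
Qed.

Lemma Neg_extend_proper_v : proper_at G Neg_extend v.
Proof.
have [_ del] := dw_deleted; have [_ ext_dw] := Neg_extend_dw.
apply: (proper_at_of_three G_mp _ dw_v (Neg_O_vtx (set21 z1 z2)) (Neg_O_vtx (set22 z1 z2))).
  rewrite /= !inE negb_or ![mmate G dw == _]eq_sym !(val_neq_deleted del) (inj_eq val_inj).
  by rewrite /= andbT; apply: contraNneq psi_z => ->.
have [psiK _] := psiC; rewrite /= ext_dw !Neg_extend_val.
exact: colr_uniq_sum (psiK _) (psiK _) psi_z.
Qed.

Lemma Neg_extend_proper_w : proper_at G Neg_extend w.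
Proof.
have [_ del_du] := du_deleted; have [del_dw _] := dw_deleted.
have [_ ext_du] := Neg_extend_du; have [ext_dw _] := Neg_extend_dw.
apply: (proper_at_of_three G_mp _ Neg_r_vtx du_w dw_w).
  rewrite /= !inE negb_or (val_neq_deleted del_du) (val_neq_deleted del_dw) /= andbT.
  apply: contraNneq u_neq_v => du_dw; apply/eqP/Some_inj.
  by rewrite -du_u -dw_v -du_dw; case: G_mp => ->.
by rewrite /= Neg_extend_val ext_du ext_dw psi_t; apply: colr_uniq_sum inK_A inK_B A_neq_B.
Qed.

Lemma Neg_extend_proper_other x : x \notin [:: u; w; v] -> proper_at G Neg_extend x.
Proof.
move=> xout d1 d2 ne x1 x2.
have kept_at d : mvtx G d = Some x -> kept d by move=> xd; rewrite xd /delS (negPf xout).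
have [e1 e1d1] : exists e : NegD G u w v, val e = d1 by exists (Sub d1 (kept_at _ x1)).
have [e2 e2d2] : exists e : NegD G u w v, val e = d2 by exists (Sub d2 (kept_at _ x2)).
move: ne x1 x2; rewrite -e1d1 -e2d2 !Neg_extend_val (inj_eq val_inj) => ne x1 x2.
apply: (@colouring_proper_at (Neg G u w v) _ (Sub x xout) psiC) => //=.
  by rewrite /Neg_vtx x1 insubT.
by rewrite /Neg_vtx x2 insubT.
Qed.

Lemma Neg_extend_colouring : colouring G Neg_extend.
Proof.
have [psiK [psim _]] := psiC; have [mateK [_ [_ [glue_free _]]]] := G_mp.
apply: colouring_intro => [d|d|d|x].
- rewrite /Neg_extend; case: insub => [y|]; first exact: psiK.
  by case: ifP => _; [exact: inK_A | exact: inK_B].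
- have [kd|dd] := boolP (kept d); last first.
    by rewrite !Neg_extend_deleted ?kept_mate // mateK orbC.
  have [y <-] : exists y : NegD G u w v, val y = d by exists (Sub d kd).
  by rewrite -val_Neg_mate !Neg_extend_val psim.
- suff -> : mglue G d = d by [].
  by apply/eqP; apply: contraNT (G_closed d) => /glue_free ->.
have [|xout] := boolP (x \in [:: u; w; v]); last exact: Neg_extend_proper_other.
rewrite !inE => /or3P [] /eqP ->.
- exact: Neg_extend_proper_u.
- exact: Neg_extend_proper_w.
- exact: Neg_extend_proper_v.
Qed.

End NegatorExtension.

Lemma negator_colouring {N : mpole} {i1 i2 o1 o2 r : mD N} {phi : mD N -> colr} :
  is_multipole N -> pole221 N i1 i2 o1 o2 r -> is_negator N i1 i2 o1 o2 r ->
  colouring N phi -> phi i1 = phi i2 \/ phi o1 = phi o2.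
Proof.
move=> N_mp N_pole [G [u [w [v [[G_mp [G_closed [_ G_uncol]]] [uwv [uw [wv neg]]]]]]]] phiC.
have [fV [fD [iso [NegI [NegO Negr]]]]] := neg.
have [_ [gD [fDK /mp_iso_colouring /(_ phiC) psiC]]] := mp_iso_sym iso.
have [du /andP [/eqP du_u /eqP du_w]] := existsP uw.
have [dw /andP [/eqP dw_w /eqP dw_v]] := existsP wv.
have [|ne_i] := eqVneq (phi i1) (phi i2); first by left.
have [|ne_o] := eqVneq (phi o1) (phi o2); first by right.
case: G_uncol; eexists; apply: (Neg_extend_colouring G_mp G_closed uwv du_u du_w dw_w dw_v psiC
  (esym NegI) (esym NegO) (esym Negr)); rewrite /= ?fDK //.
exact: pole221_flow.
Qed.

Section NTColourings.

Context {N T : mpole} {o1 o2 r : mD N} {b1 b2 c3 : mD T}.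
Local Notation M := (NT N T o1 o2 r b1 b2 c3).

Definition NT_join (phiN : mD N -> colr) (phiT : mD T -> colr) (e : colr) (d : mD M) : colr :=
  match d with
  | inl (inl d) => phiN d
  | inl (inr d) => phiT d
  | inr _ => e
  end.

Lemma NT_vtx_Some (d : mD M) (z : mV M) : mvtx M d = Some z ->
  match z with
  | inl (inl x) => exists2 a, d = inl (inl a) & mvtx N a = Some x
  | inl (inr x) => exists2 a, d = inl (inr a) & mvtx T a = Some x
  | inr _ => d \in [:: inl (inl r); inl (inr c3); inr false]
  end.
Proof.
case: d => [[a|a]|[]] //=; rewrite ?inE ?eqxx ?orbT //.
- case: eqP => [-> [<-]|_]; first by rewrite eqxx.
  by case E: (mvtx N a) => [x|] //= [<-]; exists a.
- case: eqP => [-> [<-]|_]; first by rewrite eqxx orbT.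
  by case E: (mvtx T a) => [x|] //= [<-]; exists a.
by case=> <-.
Qed.

Lemma NT_join_colouring phiN phiT e :
  colouring N phiN -> colouring T phiT -> phiN o1 = phiT b1 -> phiN o2 = phiT b2 ->
  inK e -> uniq [:: phiN r; phiT c3; e] -> colouring M (NT_join phiN phiT e).
Proof.
move=> phiNC phiTC o1b1 o2b2 Ke uniq_v.
have [phiN_K [phiN_m [phiN_g _]]] := phiNC; have [phiT_K [phiT_m [phiT_g _]]] := phiTC.
apply: colouring_intro.
- by case=> [[d|d]|b]; [exact: phiN_K | exact: phiT_K | exact: Ke].
- by case=> [[d|d]|b]; [exact: phiN_m | exact: phiT_m | ].
- case=> [[d|d]|b] //=.
    by case: eqP => [->|_]; [|case: eqP => [->|_]]; rewrite /= ?o1b1 ?o2b2 ?phiN_g.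
  by case: eqP => [->|_]; [|case: eqP => [->|_]]; rewrite /= ?o1b1 ?o2b2 ?phiT_g.
move=> [[x|x]|[]] d1 d2 + /NT_vtx_Some d1x /NT_vtx_Some d2x.
- case: d1x d2x => a1 -> x1 [a2 -> x2] ne.
  by apply: (colouring_proper_at x phiNC) => //; apply: contraNneq ne => ->.
- case: d1x d2x => a1 -> x1 [a2 -> x2] ne.
  by apply: (colouring_proper_at x phiTC) => //; apply: contraNneq ne => ->.
exact: (uniq_map_neq (s := [:: inl (inl r); inl (inr c3); inr false]) uniq_v d1x d2x).
Qed.

Lemma NT_colouring_subdivision {phi} :
  colouring M phi -> phi (inl (inl r)) + phi (inl (inr c3)) = phi (inr true).
Proof.
move=> phiC; have [phiK [phim _]] := phiC.
have at_v := colouring_proper_at (inr tt : mV M) phiC.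
have -> : phi (inr true) = phi (inr false) by exact: phim (inr false).
apply: colr_addr0_eq; apply: colr_sum3 => //.
by rewrite /= !inE negb_or !at_v //= eqxx.
Qed.

Hypotheses (o1_semi : semiedge N o1) (o2_semi : semiedge N o2) (r_semi : semiedge N r)
  (o1_neq_o2 : o1 != o2).
Hypotheses (b1_semi : semiedge T b1) (b2_semi : semiedge T b2) (c3_semi : semiedge T c3).

Lemma NT_colouring_N {phi} : colouring M phi -> colouring N (fun d => phi (inl (inl d))).
Proof.
move=> phiC.
apply: (@colouring_pullback _ M (fun x => inl (inl x)) (fun d => inl (inl d)) phi) => //.
- by move=> d d' [].
- by move=> d ne /=; rewrite (semiedge_neq_glued o1_semi ne) (semiedge_neq_glued o2_semi ne).
- by move=> d x dx /=; rewrite (semiedge_neq_bound r_semi dx) dx.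
Qed.

Lemma NT_colouring_T {phi} : colouring M phi -> colouring T (fun d => phi (inl (inr d))).
Proof.
move=> phiC.
apply: (@colouring_pullback _ M (fun x => inl (inr x)) (fun d => inl (inr d)) phi) => //.
- by move=> d d' [].
- by move=> d ne /=; rewrite (semiedge_neq_glued b1_semi ne) (semiedge_neq_glued b2_semi ne).
- by move=> d x dx /=; rewrite (semiedge_neq_bound c3_semi dx) dx.
Qed.

Lemma NT_colouring_junction {phi} : colouring M phi ->
  phi (inl (inl o1)) = phi (inl (inr b1)) /\ phi (inl (inl o2)) = phi (inl (inr b2)).
Proof.
case=> _ [_ [phig _]]; split; first by have := phig (inl (inl o1)); rewrite /= eqxx.
by have := phig (inl (inl o2)); rewrite /= [o2 == o1]eq_sym (negPf o1_neq_o2) eqxx.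
Qed.

End NTColourings.

Theorem mainTheorem4 (N T : mpole) (i1 i2 o1 o2 r : mD N) (b1 b2 c1 c2 c3 : mD T) :
  is_multipole N -> is_multipole T ->
  pole221 N i1 i2 o1 o2 r -> pole23 T b1 b2 c1 c2 c3 ->
  is_negator N i1 i2 o1 o2 r -> proper23 T b1 b2 c1 c2 c3 ->
  let M := NT N T o1 o2 r b1 b2 c3 in
  (forall phi : mD M -> colr, colouring M phi ->
     phi (inl (inl i1)) = phi (inl (inl i2)) /\
     phi (inl (inr c1)) + phi (inl (inr c2)) + phi (inr true) = 0) /\
  (perfect_negator N i1 i2 o1 o2 r -> perfect23 T b1 b2 c1 c2 c3 ->
   forall x a b c : colr, inK x -> inK a -> inK b -> inK c -> a + b + c = 0 ->
     exists phi : mD M -> colr, colouring M phi /\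
       [/\ phi (inl (inl i1)) = x, phi (inl (inl i2)) = x,
           phi (inl (inr c1)) = a, phi (inl (inr c2)) = b & phi (inr true) = c]).
Proof.
move=> N_mp T_mp N_pole T_pole N_neg T_proper M.
have [o1_semi o2_semi r_semi o1_neq_o2] := pole221_semiedges N_pole.
have [b1_semi b2_semi c3_semi] := pole23_semiedges T_pole.
split=> [phi phiC|[_ N_perfect] [_ T_perfect] x a b c Kx Ka Kb Kc abc].
  have phiN := NT_colouring_N o1_semi o2_semi r_semi phiC.
  have phiT := NT_colouring_T b1_semi b2_semi c3_semi phiC.
  have [o1b1 o2b2] := NT_colouring_junction o1_neq_o2 phiC.
  have i1i2 : phi (inl (inl i1)) = phi (inl (inl i2)).
    have [B_nz _] := T_proper _ phiT.
    case: (negator_colouring N_mp N_pole N_neg phiN) => // o1o2.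
    by move: B_nz; rewrite /= -o1b1 -o2b2 o1o2 colr_addrr eqxx.
  split=> //; rewrite -(NT_colouring_subdivision phiC).
  have := pole221_flow N_mp N_pole phiN; have := pole23_flow T_mp T_pole phiT.
  rewrite /= i1i2 colr_addrr add0r o1b1 o2b2 => -> ->.
  set X := _ + phi (inl (inr c2)).
  by rewrite -[X + _ + _]addrA colr_addrr addr0 colr_addrr.
have [y Ky yc] := inK_exists_neq c.
have [phiT [phiTC [Tb1 Tb2 Tc1 Tc2 Tc3]]] : exists phiT, colouring T phiT /\
    [/\ phiT b1 = y, phiT b2 = c, phiT c1 = a, phiT c2 = b & phiT c3 = y].
  apply/(T_perfect y c a b y); split=> //; split; last exact: inK_add.
  by rewrite (colr_addr0_eq abc) addrC.
have [phiN [phiNC [Ni1 Ni2 No1 No2 Nr]]] : exists phiN, colouring N phiN /\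
    [/\ phiN i1 = x, phiN i2 = x, phiN o1 = y, phiN o2 = c & phiN r = y + c].
  by apply/(N_perfect x x y c (y + c)); left; exists x, y, c.
exists (NT_join phiN phiT c); split; last by split.
apply: NT_join_colouring => //; rewrite ?No1 ?No2 ?Tb1 ?Tb2 //.
by rewrite Nr Tc3; apply: colr_uniq_sum.
Qed.
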